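(* Let $\Pi_q$ be a projective plane (not necessarily Desarguesian) of order $q$, let $\mu\ge 2$ be an integer and let $\delta=1/\sqrt{(q+1)\ln(q+1)}$. Assume that for some real $D\ge 1$ there exists in $\Pi_q$ a $(1,\mu-1)$-saturating set of size $k\le 2D\sqrt{(q+1)\ln(q+1)}+2$. Then there exists in $\Pi_q$ a $(1,\mu)$-saturating set of size \[ v\le 2\left(D+1+\frac{D+\delta}{q}+\delta\right)\sqrt{(q+1)\ln(q+1)}+2. \]
   Context: For an integer $m\ge1$, a point set $S\subset\Pi_q$ is $(1,m)$-saturating if for every point $Q\in\Pi_q\setminus S$ the number of secants of $S$ through $Q$, counted with multiplicity, is at least $m$, where a line $\ell$ meeting $S$ in at least two points is a secant and has multiplicity $\binom{\#(\ell\cap S)}{2}$. (A $(1,1)$-saturating set is a saturating set: every point outside $S$ is collinear with two points of $S$.) Here $\ln$ is the natural logarithm. *)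

From HB Require Import structures.
From mathcomp Require Import all_boot all_order all_algebra.
From mathcomp Require Import all_classical all_reals all_analysis.
Set Implicit Arguments. Unset Strict Implicit. Unset Printing Implicit Defensive.
Import Order.TTheory GRing.Theory Num.Theory.

Definition line_pts (P L : finType) (inc : P -> L -> bool) (l : L) : {set P} :=
  [set x | inc x l].

Definition is_projective_plane_of_order (P L : finType) (inc : P -> L -> bool)
    (q : nat) : Prop :=
  (forall x y : P, x != y -> exists! l : L, inc x l && inc y l) /\
  (forall l m : L, l != m -> exists! x : P, inc x l && inc x m) /\
  (* non-degeneracy: four points, no three collinear *)
  (exists a b c d : P, uniq [:: a; b; c; d] /\
     forall l : L, (inc a l + inc b l + inc c l + inc d l <= 2)%N) /\
  (forall l : L, #|line_pts inc l| = q.+1).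

Definition secant_count (P L : finType) (inc : P -> L -> bool)
    (S : {set P}) (Q : P) : nat :=
  \sum_(l : L | inc Q l && (2 <= #|line_pts inc l :&: S|)%N)
     'C(#|line_pts inc l :&: S|, 2).

Definition one_m_saturating (P L : finType) (inc : P -> L -> bool)
    (m : nat) (S : {set P}) : Prop :=
  forall Q : P, Q \notin S -> (m <= secant_count inc S Q)%N.

From HB Require Import structures.
From mathcomp Require Import all_boot all_order all_algebra.
From mathcomp Require Import all_classical all_reals all_analysis.
From mathcomp Require Import zify ring lra.
(* Re-imported so that the finset lemmas shadow their classical_sets namesakes. *)
From mathcomp Require Import fintype finset.
Import Order.TTheory GRing.Theory Num.Theory.
Set Implicit Arguments. Unset Strict Implicit.
Local Open Scope ring_scope.

(* Call a point Q outside S :|: A covered when some line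
   through Q meets A and contains at least two points of S :|: A.  If A is
   disjoint from S, such a line contains more points of S :|: A than of S, so
   Q lies on strictly more secants (with multiplicity) of S :|: A than of S;
   hence S :|: A is (1,mu)-saturating as soon as S is (1,mu-1)-saturating and
   every point is covered.
   Points are added to A greedily.  For an uncovered Q and a in A, the line Qa
   contains no other point of S :|: A, and each of its q - 1 remaining points
   would cover Q; lines through Q are disjoint off Q, so Q has at least
   #|A| (q - 1) potential coverers, and averaging gives a point covering a
   fraction #|A| (q - 1) / #|P| of the uncovered points.  After n steps at most
   #|P| exp(-(q - 1) n (n - 1) / (2 #|P|)) points remain uncovered, which is
   less than 1 once n > 2 s + 1 + (2 s + 2) / q with s = sqrt((q+1) ln(q+1)). *)

Lemma leq_card_bigcup (I T : finType) (A : {set I}) (F : I -> {set T}) :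
  (#|\bigcup_(i in A) F i| <= \sum_(i in A) #|F i|)%N.
Proof.
elim/big_ind2: _ => // [|m U n V Um Vn]; first by rewrite cards0.
exact: leq_trans (leq_card_setU U V).1 (leq_add Um Vn).
Qed.

Lemma card_bigcup_disjoint (I T : finType) (A : {set I}) (F : I -> {set T}) :
  {in A &, forall i j, i != j -> [disjoint F i & F j]} ->
  #|\bigcup_(i in A) F i| = (\sum_(i in A) #|F i|)%N.
Proof.
move=> disjF; pose G i := if i \in A then F i else set0.
have -> : \bigcup_(i in A) F i = \bigcup_i G i by rewrite big_mkcond.
rewrite -sum1_card partition_disjoint_bigcup; last first.
  move=> i j ij; rewrite /G -setI_eq0.
  case: ifP => iA; case: ifP => jA; rewrite ?set0I ?setI0 //.
  by rewrite setI_eq0 disjF.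
rewrite [RHS]big_mkcond; apply: eq_bigr => i _; rewrite /G.
by case: ifP => _; rewrite ?big_set0 // sum1_card.
Qed.

Lemma ltn_bin2 m n : (m < n)%N -> (1 < n)%N -> ('C(m, 2) < 'C(n, 2))%N.
Proof.
case: n => // n; rewrite ltnS => mn n_gt0.
by rewrite binS bin1 -[X in (X <= _)%N]addn1 leq_add // leq_bin2l.
Qed.

Section ProjectivePlane.

Variables (P L : finType) (inc : P -> L -> bool) (q : nat).
Hypothesis plane : is_projective_plane_of_order inc q.

Lemma line_through (x y : P) : x != y -> exists l, inc x l && inc y l.
Proof. by have [join _] := plane; move=> /join [l [xyl _]]; exists l. Qed.

Lemma lines_meet (l m : L) : l != m -> exists x, inc x l && inc x m.
Proof. by have [_ [meet _]] := plane; move=> /meet [x [xlm _]]; exists x. Qed.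

Lemma common_point_uniq (l m : L) (x y : P) : l != m ->
  inc x l -> inc x m -> inc y l -> inc y m -> x = y.
Proof.
have [_ [meet _]] := plane; move=> /meet [z [_ zP]] xl xm yl ym.
by rewrite -(zP x) ?xl ?xm // -(zP y) ?yl ?ym.
Qed.

Lemma card_line (l : L) : #|line_pts inc l| = q.+1.
Proof. by have [_ [_ [_ ->]]] := plane. Qed.

Lemma lines_through (x : P) :
  exists f : P -> L, forall y, y != x -> inc x (f y) && inc y (f y).
Proof.
have [_ [_ [[a [b [c [d [abcd _]]]]] _]]] := plane.
have ab : a != b by move: abcd; rewrite /= !inE !negb_or => /and4P[/and3P[]].
have [l0 _] := line_through ab.
exists (fun y => odflt l0 [pick l | inc x l && inc y l]) => y yx.
case: pickP => [l //| /= none].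
have [l xyl] : exists l, inc x l && inc y l by apply: line_through; rewrite eq_sym.
by have := none l; rewrite xyl.
Qed.

Lemma order_ge2 : (2 <= q)%N.
Proof.
have [_ [_ [[a [b [c [d [abcd no3]]]]] _]]] := plane.
move: abcd; rewrite /= !inE !negb_or => /and4P[/and3P[ab _ _] _ cd _].
have [l /andP[al bl]] := line_through ab.
have [m /andP[cm dm]] := line_through cd.
have lm : l != m by apply/eqP=> lm; have := no3 l; rewrite al bl lm cm dm.
have [e /andP[el em]] := lines_meet lm.
have ea : e != a by apply/eqP=> ea; have := no3 m; rewrite -ea em cm dm; case: inc.
have eb : e != b by apply/eqP=> eb; have := no3 m; rewrite -eb em cm dm; case: inc.
have : (#|e |: [set a; b]| <= #|line_pts inc l|)%N.
  by apply/subset_leq_card/subsetP => x; rewrite !inE => /orP[|/orP[]] /eqP->.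
by rewrite card_line cardsU1 cards2 ab !inE negb_or ea eb.
Qed.

Lemma card_points_le : (#|P| <= q * q + q + 1)%N.
Proof.
have [_ [_ [[a [b [c [d [abcd no3]]]]] _]]] := plane.
move: abcd; rewrite /= !inE !negb_or => /and4P[_ /andP[bc _] _ _].
have [m /andP[bm cm]] := line_through bc.
have am : ~~ inc a m by apply/negP => am; have := no3 m; rewrite am bm cm; case: inc.
have [f fP] := lines_through a.
have cover : [set: P] \subset a |: \bigcup_(y in line_pts inc m) (line_pts inc (f y) :\ a).
  apply/subsetP => x _; rewrite !inE; have [//|xa] := eqVneq x a.
  have [l /andP[xl al]] := line_through xa.
  have lm : l != m by apply: contraNneq am => <-.
  have [y /andP[yl ym]] := lines_meet lm.
  have ya : y != a by apply: contraNneq am => <-.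
  have /andP[afy yfy] := fP y ya.
  apply/bigcupP; exists y; first by rewrite inE.
  rewrite !inE xa; have [<-//|lfy] := eqVneq l (f y).
  by move: ya; rewrite (common_point_uniq lfy al afy yl yfy) eqxx.
rewrite -cardsT; apply: leq_trans (subset_leq_card cover) _.
rewrite cardsU1 addnC leq_add ?leq_b1 //.
apply: leq_trans (leq_card_bigcup _ _) _.
rewrite (eq_bigr (fun=> q)) => [|y]; first by rewrite sum_nat_const card_line mulSn addnC.
rewrite inE => ym; have ya : y != a by apply: contraNneq am => <-.
have /andP[afy _] := fP y ya.
by have := cardsD1 a (line_pts inc (f y)); rewrite inE afy card_line add1n => -[].
Qed.

End ProjectivePlane.

Section Covering.

Variables (P L : finType) (inc : P -> L -> bool).
Implicit Types (S A : {set P}) (x Q : P).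

Definition covered S A Q : bool :=
  [exists l, [&& inc Q l, [exists a in A, inc a l]
               & (2 <= #|line_pts inc l :&: (S :|: A)|)%N]].

Definition uncovered S A : {set P} :=
  [set Q | (Q \notin S :|: A) && ~~ covered S A Q].

Definition covers A x Q : bool :=
  (x != Q) && [exists l, [&& inc Q l, inc x l & [exists a in A, inc a l]]].

Lemma secant_countE S Q :
  secant_count inc S Q = (\sum_(l | inc Q l) 'C(#|line_pts inc l :&: S|, 2))%N.
Proof.
rewrite /secant_count big_mkcondr /=; apply: eq_bigr => l _.
by case: leqP => // small; rewrite bin_small.
Qed.

Lemma secant_count_covered S A Q : [disjoint A & S] -> covered S A Q ->
  (secant_count inc S Q < secant_count inc (S :|: A) Q)%N.
Proof.
move=> AS /existsP[l /and3P[Ql /existsP[a /andP[aA al]] two]].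
have subU l' : line_pts inc l' :&: S \subset line_pts inc l' :&: (S :|: A).
  exact/setIS/subsetUl.
rewrite !secant_countE (bigD1 l Ql) [X in (_ < X)%N](bigD1 l Ql) /= -addSn.
rewrite leq_add ?leq_sum // => [|l' _]; last exact/leq_bin2l/subset_leq_card.
apply: ltn_bin2 two; apply/proper_card; rewrite properE subU.
apply/subsetPn; exists a; first by rewrite !inE al aA orbT.
by rewrite !inE (disjointFr AS aA) andbF.
Qed.

Lemma saturating_setU m S A : one_m_saturating inc m S -> [disjoint A & S] ->
  uncovered S A = set0 -> one_m_saturating inc m.+1 (S :|: A).
Proof.
move=> satS AS noU Q QSA.
have QS : Q \notin S by apply: contra QSA; rewrite inE => ->.
have covQ : covered S A Q.
  apply: contraT => ncov; suff : Q \in uncovered S A by rewrite noU inE.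
  by rewrite inE QSA.
exact: leq_ltn_trans (satS Q QS) (secant_count_covered AS covQ).
Qed.

Lemma covered_setU1 S A x Q : covered S A Q -> covered S (x |: A) Q.
Proof.
move=> /existsP[l /and3P[Ql /existsP[a /andP[aA al]] two]].
apply/existsP; exists l; rewrite Ql /=; apply/andP; split.
  by apply/existsP; exists a; rewrite setU1r.
by apply: leq_trans two _; apply/subset_leq_card/setIS/setUS/subsetUr.
Qed.

Lemma covers_covered S A x Q : x \notin A -> covers A x Q -> covered S (x |: A) Q.
Proof.
move=> xA /andP[_ /existsP[l /and3P[Ql xl /existsP[a /andP[aA al]]]]].
apply/existsP; exists l; rewrite Ql /=; apply/andP; split.
  by apply/existsP; exists x; rewrite setU11 xl.
have xa : x != a by apply: contraNneq xA => ->.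
have : [set x; a] \subset line_pts inc l :&: (S :|: (x |: A)).
  by apply/subsetP => y; rewrite !inE => /orP[] /eqP->; rewrite ?xl ?al ?aA ?eqxx ?orbT ?orTb.
by move/subset_leq_card; rewrite cards2 xa.
Qed.

Lemma uncovered_setU1 S A x : x \notin A ->
  uncovered S (x |: A) \subset uncovered S A :\: [set Q in uncovered S A | covers A x Q].
Proof.
move=> xA; apply/subsetP => Q; rewrite !inE !negb_or -!andbA.
case/and4P=> QS Qx QA ncov; rewrite QS QA /=.
by rewrite (contra (@covered_setU1 S A x Q) ncov) (contra (covers_covered S xA)).
Qed.

End Covering.

Lemma le_decay_expR (R : realType) (u v c M : R) : 0 < M -> 0 <= u ->
  v * M + u * c <= u * M -> v <= u * expR (- (c / M)).
Proof.
move=> M_gt0 u_ge0 h; apply: le_trans (_ : u * (1 + - (c / M)) <= _).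
  rewrite -(ler_pM2r M_gt0) [X in _ <= X](_ : _ = u * M - u * c); first lra.
  by field; rewrite gt_eqF.
by rewrite ler_wpM2l // expR_ge1Dx.
Qed.

Section Greedy.

Variables (P L : finType) (inc : P -> L -> bool) (q : nat).
Hypothesis plane : is_projective_plane_of_order inc q.
Variable S : {set P}.
Implicit Types (A : {set P}) (x Q : P).

Definition coverers A Q : {set P} := [set x | (x \notin S :|: A) && covers inc A x Q].

Lemma uncovered_line_meets_once A Q a l y : Q \in uncovered inc S A -> a \in A ->
  inc Q l -> inc a l -> inc y l -> y \in S :|: A -> y = a.
Proof.
rewrite inE => /andP[_ ncov] aA Ql al yl ySA; apply/eqP; apply: contraNT ncov => ya.
apply/existsP; exists l; rewrite Ql /=; apply/andP; split.
  by apply/existsP; exists a; rewrite aA al.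
have : [set y; a] \subset line_pts inc l :&: (S :|: A).
  by apply/subsetP => z; rewrite in_set2 => /orP[] /eqP->; rewrite in_setI ?ySA ?inE ?yl ?al ?aA ?orbT.
by move/subset_leq_card; rewrite cards2 ya.
Qed.

Lemma card_coverers A Q : Q \in uncovered inc S A -> (#|A| * q.-1 <= #|coverers A Q|)%N.
Proof.
move=> QU; have := QU; rewrite inE => /andP[QSA _].
have [f fP] := lines_through plane Q.
have fA a : a \in A -> inc Q (f a) && inc a (f a).
  by move=> aA; apply: fP; apply: contraNneq QSA => <-; rewrite inE aA orbT.
pose X a := line_pts inc (f a) :\: (Q |: (S :|: A)).
have X_coverers : \bigcup_(a in A) X a \subset coverers A Q.
  apply/bigcupsP => a aA; apply/subsetP => x; rewrite !inE negb_or.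
  case/andP=> /andP[xQ ->] xfa; rewrite /= /covers xQ; have /andP[Qfa afa] := fA a aA.
  by apply/existsP; exists (f a); rewrite Qfa xfa; apply/existsP; exists a; rewrite aA.
have card_X a : a \in A -> (q.-1 <= #|X a|)%N.
  move=> aA; have /andP[Qfa afa] := fA a aA.
  have : line_pts inc (f a) :&: (Q |: (S :|: A)) \subset [set Q; a].
    apply/subsetP => y; rewrite in_setI in_setU1 in_set2 inE.
    case/andP=> yfa /predU1P[->|ySA]; first by rewrite eqxx.
    by rewrite (uncovered_line_meets_once QU aA Qfa afa yfa ySA) eqxx orbT.
  by move/subset_leq_card; rewrite /X cardsD (card_line plane) cards2; lia.
have disj_X : {in A &, forall a b, a != b -> [disjoint X a & X b]}.
  move=> a b aA bA ab; rewrite -setI_eq0; apply/eqP/setP => x; rewrite !inE.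
  apply/negP; rewrite !negb_or => /andP[/andP[/andP[xQ _] xfa] /andP[_ xfb]].
  have /andP[Qfa afa] := fA a aA; have /andP[Qfb bfb] := fA b bA.
  have [fab|fab] := eqVneq (f a) (f b).
    have bSA : b \in S :|: A by rewrite inE bA orbT.
    by move: ab; rewrite (uncovered_line_meets_once QU aA Qfa afa _ bSA) ?eqxx ?fab.
  by move: xQ; rewrite (common_point_uniq plane fab xfa xfb Qfa Qfb) eqxx.
apply: leq_trans (subset_leq_card X_coverers); rewrite card_bigcup_disjoint //.
by rewrite -sum_nat_const; apply: leq_sum.
Qed.

Lemma exists_point_covering_many A : uncovered inc S A != set0 ->
  exists2 x, x \notin S :|: A &
    (#|uncovered inc S A| * (#|A| * q.-1)
       <= #|P| * #|[set Q in uncovered inc S A | covers inc A x Q]|)%N.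
Proof.
case/set0Pn => Q0 Q0U; set U := uncovered inc S A.
pose cov x := [set Q in U | covers inc A x Q].
have Q0SA : Q0 \notin S :|: A by move: Q0U; rewrite inE => /andP[].
have [x xSA cov_max] :=
  @arg_maxnP _ Q0 [pred x | x \notin S :|: A] (fun x => #|cov x|) Q0SA.
exists x => //.
have double_count :
    (\sum_(Q in U) #|coverers A Q| = \sum_(y | y \notin S :|: A) #|cov y|)%N.
  rewrite /coverers /cov; under eq_bigr do rewrite -sum1dep_card.
  rewrite (exchange_big_dep (fun y => y \notin S :|: A)) => [|? ? _ /andP[] //].
  apply: eq_bigr => y ySA; rewrite sum1dep_card; apply: eq_card => Q.
  by move: ySA; rewrite /= !inE => ->.
apply: leq_trans (_ : \sum_(Q in U) #|coverers A Q| <= _)%N.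
  by rewrite -sum_nat_const; apply: leq_sum => Q; apply: card_coverers.
rewrite double_count; apply: leq_trans (_ : \sum_(y | y \notin S :|: A) #|cov x| <= _)%N.
  exact: leq_sum cov_max.
by rewrite sum_nat_cond_const leq_mul2r max_card orbT.
Qed.

Lemma greedy_step A : uncovered inc S A != set0 ->
  exists2 x, x \notin S :|: A &
    (#|uncovered inc S (x |: A)| * #|P| + #|uncovered inc S A| * (#|A| * q.-1)
       <= #|uncovered inc S A| * #|P|)%N.
Proof.
move=> /exists_point_covering_many[x xSA good]; exists x => //.
have xA : x \notin A by apply: contra xSA; rewrite inE orbC => ->.
set U := uncovered inc S A in good *; set C := [set Q in U | covers inc A x Q] in good.
have CU : C \subset U by rewrite /C setIdE subsetIl.
have := subset_leq_card (uncovered_setU1 inc S xA); rewrite -/U -/C cardsD (setIidPr CU).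
by have := subset_leq_card CU; nia.
Qed.

(* The (k+1)-st point shrinks the uncovered set by a factor exp(-k (q - 1) / #|P|),
   and the exponents add up to (q - 1) n (n - 1) / 2 / #|P|. *)
Lemma greedy_iter (R : realType) (n : nat) : exists A : {set P},
  [/\ [disjoint A & S], (#|A| <= n)%N,
      uncovered inc S A = set0 \/ #|A| = n
    & #|uncovered inc S A|%:R
        <= #|P|%:R * expR (- ((q.-1)%:R * (n%:R * (n%:R - 1)) / 2 / #|P|%:R)) :> R].
Proof.
elim: n => [|n [A [AS An AnU bound]]].
  exists set0; split; rewrite ?cards0; [by rewrite -setI_eq0 set0I | by [] | by right |].
  by rewrite !mul0r mulr0 !mul0r oppr0 expR0 mulr1 ler_nat max_card.
have [U0|Un0] := eqVneq (uncovered inc S A) set0.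
  exists A; split; [by [] | exact: leq_trans An _ | by left |].
  by rewrite U0 cards0 mulr_ge0 ?expR_ge0.
have An' : #|A| = n by case: AnU => // U0; rewrite U0 eqxx in Un0.
have [x xSA step] := greedy_step Un0.
have [xS xA] : x \notin S /\ x \notin A by move: xSA; rewrite inE negb_or => /andP.
have [Q0 _] := set0Pn _ Un0.
have M_gt0 : (0 : R) < #|P|%:R by rewrite ltr0n; apply/card_gt0P; exists Q0.
exists (x |: A); split; rewrite ?cardsU1 ?xA ?An' //; [|by right|].
  by rewrite -setI_eq0 setIUl (disjoint_setI0 AS) setU0 setI_eq0 disjoints1.
rewrite An' -(ler_nat R) !natrD !natrM in step.
apply: le_trans (le_decay_expR M_gt0 (ler0n _ _) step) _.
apply: le_trans (ler_wpM2r (expR_ge0 _) bound) _.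
rewrite -[X in X <= _]mulrA -expRD -natr1 le_eqVlt; apply/predU1l.
by congr (_ * expR _); field; rewrite gt_eqF.
Qed.

End Greedy.

(* For Q = 2 the coefficient Q^3 - Q^2 - 2Q - 1 of s^2 below is negative, whence
   the alternative hypothesis s^2 <= 6, which holds as s^2 = 3 ln 3 when q = 2. *)
Lemma quartic_ineq (R : realFieldType) (Q s : R) :
  2 <= Q -> 0 <= s -> (3 <= Q \/ s ^+ 2 <= 6) ->
  4 * Q ^+ 2 * (Q ^+ 2 + Q + 1) * s ^+ 2 <=
    (Q ^+ 2 - 1) * ((2 * s * Q + Q + 2 * s + 2) * (2 * s * Q + 2 * s + 2)).
Proof.
move=> Q_ge2 s_ge0 Q3_or_s6; rewrite -subr_ge0.
have -> : (Q ^+ 2 - 1) * ((2 * s * Q + Q + 2 * s + 2) * (2 * s * Q + 2 * s + 2))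
    - 4 * Q ^+ 2 * (Q ^+ 2 + Q + 1) * s ^+ 2 =
    4 * s ^+ 2 * (Q ^+ 3 - Q ^+ 2 - 2 * Q - 1)
    + 2 * (Q ^+ 2 - 1) * (s * (Q + 1) * (Q + 4) + Q + 2) by ring.
have : 0 <= s * (Q + 1) * (Q + 4) by rewrite !mulr_ge0 //; lra.
have : 3 <= Q ^+ 2 - 1 by nra.
case: Q3_or_s6 => [Q_ge3 | s6].
  have : 0 <= (Q - 3) * (Q ^+ 2 + 2 * Q + 4) by rewrite mulr_ge0 //; nra.
  nra.
have : 0 <= (Q - 2) * (Q ^+ 2 + Q) by rewrite mulr_ge0 //; nra.
nra.
Qed.

Lemma plane_size_ln_le (R : realType) (q : nat) (s : R) :
  (2 <= q)%N -> 0 <= s -> s ^+ 2 = q.+1%:R * ln q.+1%:R ->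
  4 * (q%:R ^+ 2 + q%:R + 1) * ln q.+1%:R
    <= (q%:R - 1) * ((2 * s + 1 + (2 * s + 2) / q%:R) * (2 * s + (2 * s + 2) / q%:R)).
Proof.
move=> q_ge2 s_ge0 sE; set Q : R := q%:R.
have Q_ge2 : 2 <= Q by rewrite /Q (ler_nat R 2).
have lnE : ln q.+1%:R = s ^+ 2 / (Q + 1) by rewrite sE -natr1; field; lra.
have Q3_or_s6 : 3 <= Q \/ s ^+ 2 <= 6.
  have [q_ge3|] := leqP 3 q; first by left; rewrite /Q (ler_nat R 3).
  rewrite ltnS => q_le2; right; rewrite sE (_ : q = 2%N); last by lia.
  have : ln (1 + 2 : R) <= 2 by apply: le_ln1Dx; lra.
  by rewrite (_ : 1 + 2 = 3%:R) //; lra.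
rewrite lnE -(ler_pM2r (_ : 0 < (Q + 1) * Q ^+ 2)); last by rewrite mulr_gt0 ?exprn_gt0 //; lra.
rewrite [leLHS](_ : _ = 4 * Q ^+ 2 * (Q ^+ 2 + Q + 1) * s ^+ 2); last by field; lra.
rewrite [leRHS](_ : _ = (Q ^+ 2 - 1) *
  ((2 * s * Q + Q + 2 * s + 2) * (2 * s * Q + 2 * s + 2))); last by field; lra.
exact: quartic_ineq.
Qed.

Lemma mul_expRN_lt1 (R : realType) (M E : R) :
  0 < M -> M * ln M < E -> M * expR (- (E / M)) < 1.
Proof.
move=> M_gt0 ME; have M_pos : M \is Num.pos by rewrite posrE.
have lnM_lt : ln M < E / M by rewrite ltr_pdivlMr // mulrC.
by rewrite -{1}(lnK M_pos) -expRD expR_lt1; lra.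
Qed.

Lemma greedy_bound_lt1 (R : realType) (q M a : nat) (s : R) :
  (2 <= q)%N -> (0 < M)%N -> (M <= q * q + q + 1)%N ->
  0 <= s -> s ^+ 2 = q.+1%:R * ln q.+1%:R ->
  2 * s + 1 + (2 * s + 2) / q%:R < a%:R ->
  M%:R * expR (- ((q.-1)%:R * (a%:R * (a%:R - 1)) / 2 / M%:R)) < 1 :> R.
Proof.
move=> q_ge2 M_gt0 M_le s_ge0 sE a_gt; set Q : R := q%:R in a_gt *.
have Q_ge2 : 2 <= Q by rewrite /Q (ler_nat R 2).
have L_ge0 : 0 <= ln q.+1%:R :> R by rewrite ln_ge0 // (ler_nat R 1).
have lnM : ln M%:R <= 2 * ln q.+1%:R :> R.
  rewrite (_ : 2 * _ = ln (q.+1%:R ^+ 2)); last by rewrite lnXn ?ltr0n // mulr_natl.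
  rewrite ler_ln ?posrE ?exprn_gt0 ?ltr0n //.
  by rewrite -natrX ler_nat (leq_trans M_le) // expnS; nia.
have MlnM : M%:R * ln M%:R <= (Q ^+ 2 + Q + 1) * (2 * ln q.+1%:R) :> R.
  apply: le_trans (ler_wpM2l (ler0n _ _) lnM) (ler_wpM2r _ _); first nra.
  by rewrite /Q -natrX -natrD natr1 ler_nat -addn1 expnS expn1.
have := plane_size_ln_le q_ge2 s_ge0 sE; rewrite -/Q.
set t := 2 * s + 1 + (2 * s + 2) / Q in a_gt *.
rewrite (_ : 2 * s + _ / Q = t - 1) => [plane_ineq|]; last by rewrite /t; ring.
have t_lt_a : (Q - 1) * (t * (t - 1)) < (Q - 1) * (a%:R * (a%:R - 1)).
  have y_ge0 : 0 <= (2 * s + 2) / Q by rewrite divr_ge0 //; lra.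
  have t_ge1 : 1 <= t by rewrite /t; lra.
  have : 0 < (a%:R - t) * (a%:R + t - 1) by apply: mulr_gt0; lra.
  by rewrite ltr_pM2l; [nra | lra].
rewrite (_ : q.-1%:R = Q - 1); last by rewrite /Q -subn1 natrB // ltnW.
by apply: mul_expRN_lt1; rewrite ?ltr0n //; lra.
Qed.

Unset Implicit Arguments.

Theorem lemma1 (R : realType) (P L : finType) (inc : P -> L -> bool) (q : nat)
  (Hplane : is_projective_plane_of_order inc q)
  (mu : nat) (Hmu : (2 <= mu)%N) (D : R) (HD : 1 <= D) :
  (exists S : {set P}, one_m_saturating inc mu.-1 S /\
     (#|S|%:R <= 2 * D * Num.sqrt (q.+1%:R * ln (q.+1%:R)) + 2 :> R)) ->
  exists V : {set P}, one_m_saturating inc mu V /\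
     (let delta : R := 1 / Num.sqrt (q.+1%:R * ln (q.+1%:R)) in
      #|V|%:R <= 2 * (D + 1 + (D + delta) / q%:R + delta)
                   * Num.sqrt (q.+1%:R * ln (q.+1%:R)) + 2).
Proof.
move=> [S [satS card_S]]; have q_ge2 := order_ge2 Hplane.
have Q_gt0 : (0 : R) < q%:R by rewrite ltr0n; lia.
have lnq_gt0 : (0 : R) < ln q.+1%:R by apply: ln_gt0; rewrite ltr1n; lia.
set s := Num.sqrt (q.+1%:R * ln q.+1%:R) in card_S *.
have s_gt0 : 0 < s by rewrite sqrtr_gt0 mulr_gt0 // ltr0n.
have sE : s ^+ 2 = q.+1%:R * ln q.+1%:R by rewrite sqr_sqrtr // ltW ?mulr_gt0 ?ltr0n.
pose a := Num.truncn (2 * s + 2 + (2 * s + 2) / q%:R).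
have /andP[a_le a_gt] : a%:R <= 2 * s + 2 + (2 * s + 2) / q%:R < a.+1%:R.
  by apply: truncn_itv; rewrite addr_ge0 ?divr_ge0 //; lra.
have [A [AS card_A _ bound]] := greedy_iter Hplane S R a.
have noU : uncovered inc S A = set0.
  have M_gt0 : (0 < #|P|)%N by have [_ [_ [[x _] _]]] := Hplane; apply/card_gt0P; exists x.
  have a_gt' : 2 * s + 1 + (2 * s + 2) / q%:R < a%:R by move: a_gt; rewrite -natr1; lra.
  have := greedy_bound_lt1 q_ge2 M_gt0 (card_points_le Hplane) (ltW s_gt0) sE a_gt'.
  by move=> /(le_lt_trans bound); rewrite ltrn1 ltnS leqn0 cards_eq0 => /eqP.
exists (S :|: A); split; first by rewrite -(prednK (ltnW Hmu)); apply: saturating_setU.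
have card_SA : #|S :|: A|%:R <= #|S|%:R + a%:R :> R.
  by rewrite -natrD ler_nat (leq_trans (leq_card_setU _ _).1) // leq_add2l.
have frac_le : (2 * s + 2) / q%:R <= (2 * D * s + 2) / q%:R.
  by rewrite ler_wpM2r ?invr_ge0; nra.
rewrite /= [leRHS](_ : _ = (2 * D * s + 2) + (2 * s + 2 + (2 * D * s + 2) / q%:R)).
  lra.
by field; rewrite !gt_eqF.
Qed.
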